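(* Let $F/\mathbb{Q}_p$ be a finite extension with ring of integers $\mathcal{O}_F$, ramification degree $e$, and residue field of cardinality $q$. Let $\nu_F$ be the right Haar measure on $\mathrm{SL}_2(F)$ normalized by $\nu_F(\mathrm{SL}_2(\mathcal{O}_F)) = 1$. For $a \in \mathbb{Z}_p \setminus \{0\}$ let \[S_F(a) = \left\{ \begin{pmatrix} \alpha_{11} & \alpha_{12} \\ \alpha_{21} & \alpha_{22} \end{pmatrix} \in \mathrm{SL}_2(F) : \begin{pmatrix} a\alpha_{11} & \alpha_{12} \\ a\alpha_{21} & \alpha_{22} \end{pmatrix} \in \mathrm{M}_2(\mathcal{O}_F) \right\}.\] Then $\nu_F(S_F(a)) = \dfrac{1 - q^{e v_p(a) + 1}}{1 - q}$, where $v_p$ is the normalized $p$-adic valuation. *)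

From HB Require Import structures.
From mathcomp Require Import all_boot all_order all_algebra.
From mathcomp Require Import all_classical all_reals all_analysis.
Set Implicit Arguments.
Unset Strict Implicit.
Unset Printing Implicit Defensive.
Import Order.TTheory GRing.Theory Num.Theory.
Local Open Scope ring_scope.
Local Open Scope classical_set_scope.

(* the value v 0 is irrelevant (v(0) = +oo is encoded by vge below).   *)

Definition vge (F : fieldType) (v : F -> int) (x : F) (n : int) : bool :=
  (x == 0) || (n <= v x)%R.

Definition in_OF (F : fieldType) (v : F -> int) (x : F) : bool := vge v x 0.

(* F, with the normalized discrete valuation v, is a finite extension of
   Q_p whose residue field has q elements.  Equivalently (standard
   structure theorem of local fields): F is a field of characteristic 0,
   complete for a normalized (surjective onto Z) discrete valuation v,
   whose residue field O_F / m_F is finite with q elements and has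
   characteristic p (i.e. v(p) >= 1). *)
Record padic_local_field (F : fieldType) (p : nat) (v : F -> int) (q : nat)
  : Prop := {
  plf_prime : prime p;
  plf_char0 : forall n : nat, (n%:R : F) = 0 -> n = 0%N;
  plf_vmul : forall x y : F, x != 0 -> y != 0 -> v (x * y) = v x + v y;
  plf_vadd : forall x y : F, x != 0 -> y != 0 -> x + y != 0 ->
               Num.min (v x) (v y) <= v (x + y);
  plf_normalized : exists pi : F, pi != 0 /\ v pi = 1;
  plf_complete : forall u : nat -> F,
      (forall n : int, exists N : nat, forall m k : nat,
          (N <= m)%N -> (N <= k)%N -> vge v (u m - u k) n) ->
      exists l : F, forall n : int, exists N : nat, forall m : nat,
          (N <= m)%N -> vge v (u m - l) n;
  plf_residue_char : vge v (p%:R : F) 1;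
  plf_residue_card : exists s : seq F,
      [/\ size s = q, all (@in_OF F v) s,
          (forall i j : nat, (i < q)%N -> (j < q)%N ->
              vge v (nth 0 s i - nth 0 s j) 1 -> i = j) &
          (forall x : F, in_OF v x -> exists2 y, y \in s & vge v (x - y) 1)]
}.

Definition ram_index (F : fieldType) (p : nat) (v : F -> int) : int :=
  v (p%:R : F).

(* Z_p inside F: the closure of Z in F. *)
Definition in_Zp (F : fieldType) (v : F -> int) (x : F) : Prop :=
  forall n : int, exists z : int, vge v (x - z%:~R) n.

Definition Zp_unit (F : fieldType) (v : F -> int) (u : F) : Prop :=
  in_Zp v u /\ u != 0 /\ in_Zp v u^-1.

Notation SL2 F := {A : 'M[F]_2 | \det A == 1}.

Lemma det1_SL2 (F : fieldType) : \det (1%:M : 'M[F]_2) == 1.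
Proof. by rewrite det1. Qed.

HB.instance Definition _ (F : fieldType) :=
  isPointed.Build (SL2 F) (exist _ 1%:M (det1_SL2 F)).

Definition SL2_ball (F : fieldType) (v : F -> int) (g : 'M[F]_2) (n : int)
  : set (SL2 F) :=
  [set h : SL2 F | forall i j, vge v (proj1_sig h i j - g i j) n].

Definition SL2_balls (F : fieldType) (v : F -> int) : set (set (SL2 F)) :=
  [set B | exists g n, B = SL2_ball v g n].

(* SL_2(F) with its Borel sigma-algebra (generated by the open balls). *)
Definition SL2m (F : fieldType) (v : F -> int) :=
  g_sigma_algebraType (SL2_balls v).

Definition rtrans (F : fieldType) (v : F -> int) (S : set (SL2m v)) (g : SL2 F)
  : set (SL2m v) :=
  [set h : SL2 F | exists2 h0, S h0 & proj1_sig h = proj1_sig h0 *m proj1_sig g].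

Definition SL2_OF (F : fieldType) (v : F -> int) : set (SL2m v) :=
  [set h : SL2 F | forall i j, in_OF v (proj1_sig h i j)].

Definition S_F (F : fieldType) (v : F -> int) (a : F) : set (SL2m v) :=
  [set h : SL2 F | forall i j : 'I_2,
     in_OF v (if j == 0 then a * proj1_sig h i j else proj1_sig h i j)].

Arguments SL2_ball {F} v g n.
Arguments SL2_balls {F} v.
Arguments SL2m {F} v.
Arguments SL2_OF {F} v.
Arguments S_F {F} v a.
Arguments rtrans {F v} S g.

Definition right_haar_normalized (F : fieldType) (v : F -> int) (R : realType)
  (nu : {measure set (SL2m v) -> \bar R}) : Prop :=
  (forall (S : set (SL2m v)) (g : SL2 F), measurable S ->
      nu (rtrans S g) = nu S) /\
  nu (SL2_OF v) = 1%E.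

(* Let [n = v(a)], [pi] a uniformizer, and read [h \in S_F(a)] as
   [h diag(a, 1) \in M_2(O_F)].  The right cosets [SL_2(O_F) g(i, b)] of
   [g(i, b) = [[pi^i / a, b], [0, a / pi^i]]], for [0 <= i <= n] and [b] running
   over representatives of [O_F / pi^(n-i)], partition [S_F(a)]: [i] is the least
   valuation of an entry in the first column of [h diag(a, 1)] (a Hermite normal
   form), and [b] is then determined modulo [pi^(n-i)].  By right invariance each
   coset has measure 1, so [nu(S_F(a)) = \sum_(j <= n) q^j] with [n = e v_p(a)].
   Measurability holds because [{h | h P \in M_2(O_F)}] is a finite union of
   balls. *)

From HB Require Import structures.
From mathcomp Require Import all_boot all_order all_algebra.
From mathcomp Require Import all_classical all_reals all_analysis.
From mathcomp Require Import zify ring.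
Import Order.TTheory GRing.Theory Num.Theory.
Set Implicit Arguments.
Unset Strict Implicit.
Unset Printing Implicit Defensive.
Local Open Scope ring_scope.
Local Open Scope classical_set_scope.

Lemma measure_bigcup_fin d (T : measurableType d) (R : realType)
    (mu : {measure set T -> \bar R}) (I : finType) (G : I -> set T) :
  (forall i, measurable (G i)) -> trivIset [set: I] G ->
  mu (\bigcup_(i : I) G i) = (\sum_(i : I) mu (G i))%E.
Proof.
have enumT : [set: I] = [set` enum I] by apply/seteqP; split=> i; rewrite /= mem_enum.
move=> mG; rewrite enumT => tG.
by rewrite measure_fin_bigcup // -fsbig_seq ?enum_uniq // big_enum.
Qed.

Lemma geometric_sum (K : fieldType) (x : K) m :
  x != 1 -> \sum_(j < m) x ^+ j = (1 - x ^+ m) / (1 - x).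
Proof. by move=> x1; rewrite -opprB subrX1 -mulNr opprB mulrC mulKf // subr_eq0 eq_sym. Qed.

Lemma ord2P (i : 'I_2) : i = 0 \/ i = 1.
Proof. by case: i => [[|[|]]] // ?; [left|right]; apply: val_inj. Qed.

Lemma mulmx2E (R : pzRingType) (A B : 'M[R]_2) i j :
  (A *m B) i j = A i 0 * B 0 j + A i 1 * B 1 j.
Proof.
rewrite mxE !big_ord_recr /= big_ord0 add0r.
by congr (A _ _ * B _ _ + A _ _ * B _ _); apply: val_inj.
Qed.

Lemma det_mx2 (R : comPzRingType) (A : 'M[R]_2) :
  \det A = A 0 0 * A 1 1 - A 0 1 * A 1 0.
Proof.
rewrite (expand_det_row _ 0) !big_ord_recr /= big_ord0 add0r /cofactor !det_mx11 !mxE /=.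
rewrite !expr0 !expr1 !mul1r mulN1r mulrN.
by congr (A _ _ * A _ _ - A _ _ * A _ _); apply: val_inj.
Qed.

Definition mx2 (T : Type) (x y z w : T) : 'M[T]_2 :=
  \matrix_(r, c) if r == 0 then (if c == 0 then x else y) else (if c == 0 then z else w).

Section Valuation.
Variables (F : fieldType) (v : F -> int).
Hypothesis vmul : forall x y : F, x != 0 -> y != 0 -> v (x * y) = v x + v y.
Hypothesis vadd : forall x y : F, x != 0 -> y != 0 -> x + y != 0 ->
  Num.min (v x) (v y) <= v (x + y).

Lemma v1 : v 1 = 0.
Proof.
by have := vmul (oner_neq0 F) (oner_neq0 F); rewrite mulr1 => /esym/(canRL (addrK _)); rewrite subrr.
Qed.

Lemma vN x : x != 0 -> v (- x) = v x.
Proof.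
have N1 : (-1 : F) != 0 by rewrite oppr_eq0 oner_neq0.
have vN1 : v (-1) = 0 by have := vmul N1 N1; rewrite mulrNN mulr1 v1; lia.
by move=> x0; rewrite -mulN1r vmul // vN1 add0r.
Qed.

Lemma vV x : x != 0 -> v x^-1 = - v x.
Proof. by move=> x0; have := vmul x0 (invr_neq0 x0); rewrite mulfV // v1; lia. Qed.

Lemma vX x m : x != 0 -> v (x ^+ m) = m%:Z * v x.
Proof.
move=> x0; elim: m => [|m IH]; first by rewrite expr0 v1 mul0r.
by rewrite exprS vmul ?expf_neq0 // IH; lia.
Qed.

Lemma vgeE x n : x != 0 -> vge v x n = (n <= v x).
Proof. by rewrite /vge => /negPf ->. Qed.

Lemma vge0 n : vge v 0 n.
Proof. by rewrite /vge eqxx. Qed.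

Lemma vge_v x : vge v x (v x).
Proof. by rewrite /vge lexx orbT. Qed.

Lemma vge1 : vge v 1 0.
Proof. by rewrite vgeE ?oner_neq0 // v1. Qed.

Lemma vgeW m n x : m <= n -> vge v x n -> vge v x m.
Proof. by rewrite /vge => mn /orP [->|/(le_trans mn) ->]; rewrite ?orbT. Qed.

Lemma vgeMl c x n : c != 0 -> vge v (c * x) n = vge v x (n - v c).
Proof.
move=> c0; have [->|x0] := eqVneq x 0; first by rewrite mulr0 !vge0.
by rewrite !vgeE ?mulf_neq0 // vmul //; apply/idP/idP; lia.
Qed.

Lemma vgeMr c x n : c != 0 -> vge v (x * c) n = vge v x (n - v c).
Proof. by move=> c0; rewrite mulrC vgeMl. Qed.

Lemma vgeM x y m n : vge v x m -> vge v y n -> vge v (x * y) (m + n).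
Proof.
have [->|x0] := eqVneq x 0; first by rewrite mul0r !vge0.
by rewrite vgeMl // vgeE // => hx; apply: vgeW; lia.
Qed.

Lemma vgeN x n : vge v (- x) n = vge v x n.
Proof.
have [->|x0] := eqVneq x 0; first by rewrite oppr0.
by rewrite !vgeE ?oppr_eq0 // vN.
Qed.

Lemma vgeD x y n : vge v x n -> vge v y n -> vge v (x + y) n.
Proof.
have [->|x0] := eqVneq x 0; first by rewrite add0r.
have [->|y0] := eqVneq y 0; first by rewrite addr0.
have [->|xy0] := eqVneq (x + y) 0; first by rewrite vge0.
rewrite !vgeE // => hx hy; apply: le_trans (vadd x0 y0 xy0).
by rewrite le_min hx hy.
Qed.

Lemma vgeB x y n : vge v x n -> vge v y n -> vge v (x - y) n.
Proof. by move=> hx hy; apply: vgeD; rewrite ?vgeN. Qed.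

Lemma vge_int (z : int) : vge v z%:~R 0.
Proof.
have vge_nat m : vge v m%:R 0.
  by elim: m => [|m IH]; rewrite ?vge0 // -addn1 natrD vgeD ?vge1.
by case: z => m; rewrite ?NegzE ?mulrNz ?vgeN vge_nat.
Qed.

Lemma in_Zp_integral x : in_Zp v x -> vge v x 0.
Proof. by case/(_ 0) => z hz; rewrite -(subrK z%:~R x) vgeD ?vge_int. Qed.

Lemma Zp_unit_v0 u : Zp_unit v u -> v u = 0.
Proof.
case=> /in_Zp_integral uO [u0 /in_Zp_integral uVO].
by move: uO uVO; rewrite !vgeE ?invr_neq0 // vV //; lia.
Qed.

Definition mx_vge (A : 'M[F]_2) (n : int) := forall i j, vge v (A i j) n.

Lemma mx_vgeD A B n : mx_vge A n -> mx_vge B n -> mx_vge (A + B) n.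
Proof. by move=> hA hB i j; rewrite mxE vgeD. Qed.

Lemma mx_vgeM A B m n : mx_vge A m -> mx_vge B n -> mx_vge (A *m B) (m + n).
Proof. by move=> hA hB i j; rewrite mulmx2E vgeD ?vgeM. Qed.

Lemma mx_vgeW A m n : m <= n -> mx_vge A n -> mx_vge A m.
Proof. by move=> mn hA i j; apply: vgeW (hA i j). Qed.

Lemma mx_vge_bounded A : exists K : nat, mx_vge A (- K%:Z).
Proof.
pose w i j := `|v (A i j)|%N.
exists (w 0%R 0%R + w 0%R 1%R + w 1%R 0%R + w 1%R 1%R)%N => i j.
have vgeA i' j' : vge v (A i' j') (- (w i' j')%:Z).
  have [->|Aij0] := eqVneq (A i' j') 0; first exact: vge0.
  by rewrite vgeE // /w; lia.
by case: (ord2P i) => ->; case: (ord2P j) => ->; apply: vgeW (vgeA _ _); lia.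
Qed.

Lemma int_SL2_inv g : \det g = 1 -> mx_vge g 0 ->
  exists2 g', mx_vge g' 0 & g' *m g = 1%:M.
Proof.
rewrite det_mx2 => detg gO; exists (mx2 (g 1 1) (- g 0 1) (- g 1 0) (g 0 0)).
  by move=> i j; case: (ord2P i) => ->; case: (ord2P j) => ->; rewrite mxE /= ?vgeN.
apply/matrixP => i j; rewrite mulmx2E.
by case: (ord2P i) => ->; case: (ord2P j) => ->; rewrite !mxE /= -?detg; ring.
Qed.

Section Uniformizer.
Variables (pi : F) (pi0 : pi != 0) (vpi : v pi = 1).

Lemma v_piX i : v (pi ^+ i) = i%:Z.
Proof. by rewrite vX // vpi mulr1. Qed.

Lemma piX_neq0 i : pi ^+ i != 0.
Proof. exact: expf_neq0. Qed.

Lemma vge_pi : vge v pi 1.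
Proof. by rewrite vgeE // vpi. Qed.

Section Residues.
Variables (q : nat) (s : seq F).
Hypothesis s_size : size s = q.
Hypothesis s_int : all (in_OF v) s.
Hypothesis s_sep : forall i j : nat, (i < q)%N -> (j < q)%N ->
  vge v (nth 0 s i - nth 0 s j) 1 -> i = j.
Hypothesis s_cover : forall x : F, in_OF v x -> exists2 y, y \in s & vge v (x - y) 1.

Definition digit (i : 'I_q) := nth 0 s i.

Definition expansion (t : seq 'I_q) : F :=
  foldr (fun i x => digit i + pi * x) 0 t.

Lemma digit_int i : vge v (digit i) 0.
Proof. by move/allP: s_int; apply; rewrite mem_nth // s_size. Qed.

Lemma expansion_int t : vge v (expansion t) 0.
Proof.
elim: t => [|i t IH] /=; first exact: vge0.
by rewrite vgeD ?digit_int // (vgeW _ (vgeM vge_pi IH)).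
Qed.

Lemma expansion_approx m x : vge v x 0 ->
  exists t : m.-tuple 'I_q, vge v (x - expansion t) m%:Z.
Proof.
elim: m x => [|m IH] x xO; first by exists [tuple]; rewrite /= subr0.
have [y ys xy] := s_cover xO.
have iq : (index y s < q)%N by rewrite -s_size index_mem.
have [|t ht] := IH ((x - y) / pi); first by rewrite vgeMr ?invr_neq0 // vV // vpi.
exists [tuple of Ordinal iq :: t]; rewrite /= /digit nth_index //.
have -> : x - (y + pi * expansion t) = pi * ((x - y) / pi - expansion t).
  by rewrite mulrBr mulrCA mulfV // mulr1 opprD addrA.
by rewrite vgeMl // vpi; apply: vgeW ht; lia.
Qed.

Lemma expansion_inj (t t' : seq 'I_q) : size t = size t' ->
  vge v (expansion t - expansion t') (size t)%:Z -> t = t'.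
Proof.
elim: t t' => [|i t IH] [|i' t'] //= [tt'] h.
have ii' : i = i'.
  apply/val_inj/(s_sep (ltn_ord i) (ltn_ord i')).
  have -> : nth 0 s i - nth 0 s i' = expansion (i :: t) - expansion (i' :: t')
                                     - pi * (expansion t - expansion t').
    by rewrite /= mulrBr /digit; ring.
  apply: vgeB; first by apply: vgeW h; lia.
  by rewrite vgeMl // vpi vgeB ?expansion_int.
subst i'; congr (_ :: _); apply: IH => //.
move: h; rewrite /= opprD addrACA subrr add0r -mulrBr vgeMl // vpi.
by apply: vgeW; lia.
Qed.

Lemma residue_card_gt1 : (1 < q)%N.
Proof.
rewrite ltnNge; apply/negP => q_le1.
have digit0 y : y \in s -> y = nth 0 s 0%N.
  move=> ys; rewrite -(nth_index 0 ys); congr nth; apply/eqP; rewrite -leqn0 -ltnS.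
  by apply: leq_trans q_le1; rewrite -s_size index_mem.
have [y0 /digit0 -> h0] := s_cover (vge0 0).
have [y1 /digit0 -> h1] := s_cover vge1.
have := vgeB h1 h0; rewrite opprB addrA subrK.
by rewrite subr0 vgeE ?oner_neq0 // v1.
Qed.

Lemma measurable_SL2_ball g n : measurable (SL2_ball v g n : set (SL2m v)).
Proof. by apply: sub_sigma_algebra; exists g, n. Qed.

Lemma measurable_SL2_OF : measurable (SL2_OF v).
Proof.
rewrite (_ : SL2_OF v = SL2_ball v 0 0); first exact: measurable_SL2_ball.
by apply/seteqP; split => h /= hO i j; move: (hO i j); rewrite mxE subr0.
Qed.

Definition mulr_int (P : 'M[F]_2) : set (SL2m v) :=
  [set h : SL2m v | mx_vge (proj1_sig h *m P) 0].

(* Since [P] and [P^-1] are bounded, membership of [h] only depends on [h P]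
   modulo a fixed power of [pi], i.e. on finitely many digits. *)
Lemma measurable_mulr_int P Q : P *m Q = 1%:M -> Q *m P = 1%:M ->
  measurable (mulr_int P).
Proof.
move=> PQ QP; have [K1 hP] := mx_vge_bounded P; have [K2 hQ] := mx_vge_bounded Q.
set K := (K1 + K2)%N.
have {}hP : mx_vge P (- K%:Z) by apply: mx_vgeW hP; lia.
have {}hQ : mx_vge Q (- K%:Z) by apply: mx_vgeW hQ; lia.
pose D := {ffun 'I_2 * 'I_2 -> (K + K).-tuple 'I_q}.
pose Y (phi : D) := \matrix_(i, j) expansion (phi (i, j)).
suff -> : mulr_int P = \bigcup_(phi in [set: D]) SL2_ball v (Y phi *m Q) K%:Z.
  by apply: fin_bigcup_measurable => [|phi _]; [exact: finite_finset|exact: measurable_SL2_ball].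
apply/seteqP; split => h; rewrite /mulr_int /=.
- move=> hP0.
  have /fin_all_exists [f hf] : forall ij : 'I_2 * 'I_2, exists t : (K + K).-tuple 'I_q,
      vge v ((proj1_sig h *m P) ij.1 ij.2 - expansion t) (K + K)%N%:Z.
    by move=> [i j]; apply: expansion_approx.
  exists (finfun f) => //= i j.
  have := @mx_vgeM (proj1_sig h *m P - Y (finfun f)) Q (K + K)%N%:Z (- K%:Z).
  have -> : (K + K)%N%:Z + - K%:Z = K%:Z by lia.
  move=> /(_ _ hQ i j); rewrite mulmxBl -mulmxA PQ mulmx1 !mxE; apply.
  by move=> i' j'; move: (hf (i', j')); rewrite !mxE ffunE.
- case=> phi _ hball.
  have -> : proj1_sig h *m P = (proj1_sig h - Y phi *m Q) *m P + Y phi.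
    by rewrite mulmxBl -mulmxA QP mulmx1 subrK.
  apply: mx_vgeD => [|i j]; last by rewrite mxE expansion_int.
  have := @mx_vgeM (proj1_sig h - Y phi *m Q) P K%:Z (- K%:Z).
  by rewrite subrr; apply => // i j; have := hball i j; rewrite !mxE.
Qed.

Section Cosets.
Variables (a : F) (a0 : a != 0) (n : nat) (va : v a = n%:Z).

Lemma v_piXa i : v (pi ^+ i / a) = i%:Z - n%:Z.
Proof. by rewrite vmul ?invr_neq0 ?piX_neq0 // vV // v_piX va. Qed.

Definition coset_rep i b := mx2 (pi ^+ i / a) b 0 (a / pi ^+ i).
Definition coset_rep_inv i b := mx2 (a / pi ^+ i) (- b) 0 (pi ^+ i / a).

Lemma coset_repK i b : coset_rep i b *m coset_rep_inv i b = 1%:M.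
Proof.
have piX0 := piX_neq0 i; apply/matrixP => r c; rewrite mulmx2E.
by case: (ord2P r) => ->; case: (ord2P c) => ->; rewrite !mxE /=; field; rewrite ?piX0 ?a0.
Qed.

Lemma coset_rep_invK i b : coset_rep_inv i b *m coset_rep i b = 1%:M.
Proof.
have piX0 := piX_neq0 i; apply/matrixP => r c; rewrite mulmx2E.
by case: (ord2P r) => ->; case: (ord2P c) => ->; rewrite !mxE /=; field; rewrite ?piX0 ?a0.
Qed.

Lemma det_coset_rep i b : \det (coset_rep i b) == 1.
Proof.
by have piX0 := piX_neq0 i; rewrite det_mx2 !mxE /=; apply/eqP; field; rewrite ?piX0 ?a0.
Qed.

Lemma det_coset_rep_inv i b : \det (coset_rep_inv i b) == 1.
Proof.
by have piX0 := piX_neq0 i; rewrite det_mx2 !mxE /=; apply/eqP; field; rewrite ?piX0 ?a0.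
Qed.

Definition coset i b : set (SL2m v) :=
  rtrans (SL2_OF v) (exist _ (coset_rep i b) (det_coset_rep i b)).

Lemma cosetE i b : coset i b = mulr_int (coset_rep_inv i b).
Proof.
apply/seteqP; split => h /=.
- case=> h0 h0O hh; rewrite /mulr_int /= hh -mulmxA coset_repK mulmx1; exact: h0O.
- move=> hO; have deth : \det (proj1_sig h *m coset_rep_inv i b) == 1.
    by rewrite det_mulmx (eqP (proj2_sig h)) (eqP (det_coset_rep_inv i b)) mulr1.
  exists (exist (fun A : 'M[F]_2 => \det A == 1) _ deth); first exact: hO.
  by rewrite /= -mulmxA coset_rep_invK mulmx1.
Qed.

Lemma coset_rep_ratio_int i i' b b' :
  mx_vge (coset_rep i b *m coset_rep_inv i' b') 0 ->
  i = i' /\ vge v (b - b') (n%:Z - i%:Z).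
Proof.
have [piX0 piX0'] := (piX_neq0 i, piX_neq0 i').
move=> M; have m00 := M 0 0; have m11 := M 1 1; rewrite !mulmx2E !mxE /= in m00 m11.
have e00 : pi ^+ i / a * (a / pi ^+ i') + b * 0 = pi ^+ i / pi ^+ i'.
  by field; rewrite ?piX0 ?piX0' ?a0.
have e11 : 0 * - b' + a / pi ^+ i * (pi ^+ i' / a) = pi ^+ i' / pi ^+ i.
  by field; rewrite ?piX0 ?piX0' ?a0.
rewrite e00 e11 !vgeE ?mulf_neq0 ?invr_neq0 // !vmul ?invr_neq0 // !vV // !v_piX in m00 m11.
have ii' : i = i' by lia.
subst i'; split => //; have := M 0 1; rewrite mulmx2E !mxE /=.
have -> : pi ^+ i / a * - b' + b * (pi ^+ i / a) = pi ^+ i / a * (b - b') by ring.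
by rewrite vgeMl ?mulf_neq0 ?invr_neq0 // v_piXa sub0r opprB.
Qed.

Lemma coset_disjoint i i' b b' h : coset i b h -> coset i' b' h ->
  i = i' /\ vge v (b - b') (n%:Z - i%:Z).
Proof.
rewrite !cosetE /mulr_int /= => hi hi'.
have det_hi : \det (proj1_sig h *m coset_rep_inv i b) = 1.
  by rewrite det_mulmx (eqP (proj2_sig h)) (eqP (det_coset_rep_inv i b)) mulr1.
have [g gO ghi] := int_SL2_inv det_hi hi.
have gh : g *m proj1_sig h = coset_rep i b.
  by rewrite -(mulmx1 (g *m proj1_sig h)) -(coset_rep_invK i b) !mulmxA -(mulmxA g) ghi mul1mx.
apply: coset_rep_ratio_int; rewrite -gh -mulmxA.
by have := mx_vgeM gO hi'; rewrite addr0.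
Qed.

Lemma first_column_pivot (H : 'M[F]_2) : \det H = 1 ->
  (a * H 0 0 != 0) && vge v (a * H 1 0) (v (a * H 0 0)) \/
  (a * H 1 0 != 0) && vge v (a * H 0 0) (v (a * H 1 0)).
Proof.
move=> detH; have [aH10|aH10] := eqVneq (a * H 1 0) 0.
  left; rewrite aH10 vge0 andbT mulf_neq0 //; apply/eqP => H00.
  move/eqP: aH10; rewrite mulf_eq0 (negPf a0) => /eqP H10.
  by move: detH; rewrite det_mx2 H00 H10 !(mul0r, mulr0) subrr => /eqP; rewrite eq_sym oner_eq0.
have [aH00|aH00] := eqVneq (a * H 0 0) 0; first by right; rewrite aH00 vge0 andbT.
rewrite /= !vgeE //; case: (leP (v (a * H 0 0)) (v (a * H 1 0))) => ?; first by left.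
by right; apply: ltW.
Qed.

Lemma pivot_vge_a (H : 'M[F]_2) : \det H = 1 -> (forall r, vge v (H r 1) 0) ->
  vge v (a * H 1 0) (v (a * H 0 0)) -> vge v a (v (a * H 0 0)).
Proof.
rewrite det_mx2 => detH h1 piv.
have aE : a = a * H 0 0 * H 1 1 - H 0 1 * (a * H 1 0).
  by rewrite -{1}[a]mulr1 -detH; ring.
rewrite {1}aE; apply: vgeB.
  by have := vgeM (vge_v (a * H 0 0)) (h1 1); rewrite addr0.
by have := vgeM (h1 0) piv; rewrite add0r.
Qed.

(* With [z = H01 pi^i / (a H00)], the second column of [H *m coset_rep_inv i b]
   is [(H00 (z - b), H10 (z - b) + pi^i / (a H00))], using [\det H = 1]. *)
Lemma coset_of_pivot (H : 'M[F]_2) i b : \det H = 1 -> (forall r, vge v (H r 1) 0) ->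
  a * H 0 0 != 0 -> v (a * H 0 0) = i%:Z -> vge v (a * H 1 0) i%:Z ->
  vge v (H 0 1 * (pi ^+ i / (a * H 0 0)) - b) (n%:Z - i%:Z) ->
  mx_vge (H *m coset_rep_inv i b) 0.
Proof.
move=> detH h1 aH00 vaH00 piv hb; set z := H 0 1 * _ in hb.
have piX0 := piX_neq0 i.
have H00 : H 0 0 != 0 by move: aH00; rewrite mulf_eq0 negb_or => /andP[].
have vH00 : vge v (H 0 0) (i%:Z - n%:Z) by rewrite -va -vgeMl // vgeE // vaH00.
have vH10 : vge v (H 1 0) (i%:Z - n%:Z) by rewrite -va -vgeMl.
have vpiaH : v (pi ^+ i / (a * H 0 0)) = 0.
  by rewrite vmul ?invr_neq0 // vV // v_piX vaH00 subrr.
move=> r c; rewrite mulmx2E; case: (ord2P r) => ->; case: (ord2P c) => ->; rewrite !mxE /=.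
- have -> : H 0 0 * (a / pi ^+ i) + H 0 1 * 0 = a * H 0 0 / pi ^+ i by field.
  by rewrite vgeMr ?invr_neq0 // vV // v_piX vgeE // vaH00; lia.
- have -> : H 0 0 * - b + H 0 1 * (pi ^+ i / a) = H 0 0 * (z - b).
    by rewrite /z; field; rewrite ?a0 ?H00.
  by apply: vgeW (vgeM vH00 hb); lia.
- have -> : H 1 0 * (a / pi ^+ i) + H 1 1 * 0 = a * H 1 0 / pi ^+ i by field.
  by rewrite vgeMr ?invr_neq0 // vV // v_piX; apply: vgeW piv; lia.
- have -> : H 1 0 * - b + H 1 1 * (pi ^+ i / a) =
    H 1 0 * (z - b) + (H 0 0 * H 1 1 - H 0 1 * H 1 0) * (pi ^+ i / (a * H 0 0)).
    by rewrite /z; field; rewrite ?a0 ?H00.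
  rewrite -det_mx2 detH mul1r vgeD //; last by rewrite vgeE ?mulf_neq0 ?invr_neq0 // vpiaH.
  by apply: vgeW (vgeM vH10 hb); lia.
Qed.

Lemma coset_cover_pivot (H : 'M[F]_2) : \det H = 1 ->
  (forall r, vge v (a * H r 0) 0) -> (forall r, vge v (H r 1) 0) ->
  (a * H 0 0 != 0) && vge v (a * H 1 0) (v (a * H 0 0)) ->
  exists i, (i <= n)%N /\ exists2 z, vge v z 0 &
    forall b, vge v (z - b) (n%:Z - i%:Z) -> mx_vge (H *m coset_rep_inv i b) 0.
Proof.
move=> detH h0 h1 /andP[aH00 piv]; set i := absz (v (a * H 0 0)).
have vaH00 : v (a * H 0 0) = i%:Z by move: (h0 0); rewrite vgeE // /i; lia.
exists i; split; first by move: (pivot_vge_a detH h1 piv); rewrite vgeE // va vaH00; lia.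
have vpiaH : v (pi ^+ i / (a * H 0 0)) = 0.
  by rewrite vmul ?invr_neq0 ?piX_neq0 // vV // v_piX vaH00 subrr.
exists (H 0 1 * (pi ^+ i / (a * H 0 0))).
  by rewrite vgeMr ?mulf_neq0 ?invr_neq0 ?piX_neq0 // vpiaH subr0.
by move=> b hb; apply: coset_of_pivot => //; rewrite -vaH00.
Qed.

Lemma coset_cover (H : 'M[F]_2) : \det H = 1 ->
  (forall r, vge v (a * H r 0) 0) -> (forall r, vge v (H r 1) 0) ->
  exists i, (i <= n)%N /\ exists2 z, vge v z 0 &
    forall b, vge v (z - b) (n%:Z - i%:Z) -> mx_vge (H *m coset_rep_inv i b) 0.
Proof.
move=> detH h0 h1; case: (first_column_pivot detH) => piv.
  exact: coset_cover_pivot.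
pose rot := mx2 (0 : F) 1 (-1) 0; pose rotV := mx2 (0 : F) (-1) 1 0.
have rotVK : rotV *m (rot *m H) = H.
  apply/matrixP => r c; rewrite !mulmx2E.
  by case: (ord2P r) => ->; case: (ord2P c) => ->; rewrite !mxE /=; ring.
have rotH r c : (rot *m H) r c = if r == 0 then H 1 c else - H 0 c.
  by rewrite mulmx2E; case: (ord2P r) => ->; rewrite !mxE /=; ring.
have [||||i [le_in [z zO hz]]] := @coset_cover_pivot (rot *m H).
- by rewrite det_mulmx detH mulr1 det_mx2 !mxE /=; ring.
- by move=> r; rewrite rotH; case: ifP; rewrite ?mulrN ?vgeN.
- by move=> r; rewrite rotH; case: ifP; rewrite ?vgeN.
- by rewrite !rotH /= mulrN vgeN.
exists i; split => //; exists z => // b /hz hrot.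
have rotV_int : mx_vge rotV 0.
  by move=> r c; case: (ord2P r) => ->; case: (ord2P c) => ->; rewrite mxE /= ?vgeN ?vge0 ?vge1.
by rewrite -rotVK -mulmxA; have := mx_vgeM rotV_int hrot; rewrite add0r.
Qed.

Lemma S_FE : S_F v a = mulr_int (mx2 a 0 0 1).
Proof.
apply/seteqP; split => h hS r c; move: (hS r c); rewrite /in_OF mulmx2E !mxE /=;
  by case: (ord2P c) => ->; rewrite /= ?(mulr0, addr0, mul0r, add0r, mulr1) 1?mulrC; apply.
Qed.

Lemma coset_sub_S_F i b : (i <= n)%N -> vge v b 0 -> coset i b `<=` S_F v a.
Proof.
move=> le_in bO h; rewrite cosetE S_FE /mulr_int /= => hi.
have T_int : mx_vge (coset_rep i b *m mx2 a 0 0 1) 0.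
  move=> r c; rewrite mulmx2E; have piX0 := piX_neq0 i.
  case: (ord2P r) => ->; case: (ord2P c) => ->; rewrite !mxE /= ?(mulr0, mul0r, addr0, add0r, mulr1) //.
  - by rewrite mulfVK // vgeE // v_piX.
  - by apply: vge0.
  - by rewrite vgeMr ?invr_neq0 // vV // v_piX vgeE // va; lia.
rewrite -(mulmx1 (proj1_sig h)) -(coset_rep_invK i b) !mulmxA -(mulmxA _ _ (mx2 a 0 0 1)).
by have := mx_vgeM hi T_int; rewrite addr0.
Qed.

Lemma measurable_coset i b : measurable (coset i b).
Proof. by rewrite cosetE; apply: measurable_mulr_int (coset_rep_invK i b) (coset_repK i b). Qed.

Section Haar.
Variables (R : realType) (nu : {measure set (SL2m v) -> \bar R}).
Hypothesis nu_haar : right_haar_normalized nu.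

Lemma measure_coset i b : nu (coset i b) = 1%E.
Proof. by rewrite (proj1 nu_haar) ?(proj2 nu_haar) //; exact: measurable_SL2_OF. Qed.

Definition coset_layer j : set (SL2m v) :=
  \bigcup_(t : j.-tuple 'I_q) coset (n - j) (expansion t).

Lemma measurable_coset_layer j : measurable (coset_layer j).
Proof.
by apply: fin_bigcup_measurable => [|t _]; [exact: finite_finset | exact: measurable_coset].
Qed.

Lemma measure_coset_layer j : (j <= n)%N -> nu (coset_layer j) = (q ^ j)%:R%:E.
Proof.
move=> le_jn; rewrite measure_bigcup_fin => [|t|]; first last.
- move=> t t' _ _ [h [ht ht']]; have [_ e] := coset_disjoint ht ht'.
  apply/val_inj/expansion_inj; rewrite ?size_tuple //; apply: vgeW e; lia.
- exact: measurable_coset.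
under eq_bigr do rewrite measure_coset.
by rewrite sumEFin sumr_const card_tuple card_ord.
Qed.

Lemma S_F_layers : S_F v a = \bigcup_(j : 'I_n.+1) coset_layer j.
Proof.
apply/seteqP; split => h.
- move=> hS; have deth : \det (proj1_sig h) = 1 by apply/eqP; exact: (proj2_sig h).
  have [i [le_in [z zO hz]]] := coset_cover deth (fun r => hS r 0) (fun r => hS r 1).
  have [t ht] := expansion_approx (n - i) zO.
  have lt_ni : (n - i < n.+1)%N by rewrite ltnS leq_subr.
  exists (Ordinal lt_ni) => //; exists t => //=.
  by rewrite cosetE subKn //; apply: hz; apply: vgeW ht; lia.
- by case=> j _ [t _]; apply: coset_sub_S_F; [exact: leq_subr | exact: expansion_int].
Qed.

Lemma measure_S_F : nu (S_F v a) = (\sum_(j < n.+1) (q ^ j)%:R)%:E.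
Proof.
rewrite S_F_layers measure_bigcup_fin => [|j|]; first last.
- move=> j j' _ _ [h [[t _ ht] [t' _ ht']]]; have [e _] := coset_disjoint ht ht'.
  by apply/val_inj => /=; move: (ltn_ord j) (ltn_ord j'); lia.
- exact: measurable_coset_layer.
by rewrite -sumEFin; apply: eq_bigr => j _; rewrite measure_coset_layer // -ltnS.
Qed.

End Haar.
End Cosets.
End Residues.
End Uniformizer.
End Valuation.

Theorem corollary2p4 (F : fieldType) (p : nat) (v : F -> int) (q : nat)
  (HF : padic_local_field p v q)
  (R : realType) (nu : {measure set (SL2m v) -> \bar R})
  (Hnu : right_haar_normalized nu)
  (a : F) (Ha : in_Zp v a) (Ha0 : a != 0)
  (k : nat) (u : F) (Hu : Zp_unit v u) (Hk : a = (p%:R : F) ^+ k * u) :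
  nu (S_F v a) =
  ((1 - (q%:R : R) ^+ (`|ram_index p v|%N * k + 1)) / (1 - q%:R))%:E.
Proof.
case: HF => p_prime char0 vmul vadd [pi [pi0 vpi]] _ vp [s [s_size s_int s_sep s_cover]].
have p0 : (p%:R : F) != 0 by apply: contraTneq (prime_gt0 p_prime) => /char0 ->.
have va : v a = (`|ram_index p v|%N * k)%N%:Z.
  rewrite Hk vmul ?expf_neq0 ?(proj1 (proj2 Hu)) // (vX vmul) // (Zp_unit_v0 vmul vadd Hu).
  by move: vp; rewrite /ram_index vgeE //; lia.
rewrite (measure_S_F vmul vadd pi0 vpi s_size s_int s_sep s_cover Ha0 va Hnu) addn1.
have q_neq1 : (q%:R : R) != 1.
  by rewrite pnatr_eq1 gtn_eqF // (residue_card_gt1 vmul vadd s_size s_cover).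
by under eq_bigr do rewrite natrX; rewrite geometric_sum.
Qed.
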